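(* Assume $\mathcal A$ is convex and closed, $\mathcal P$ is convex and closed, $V_0$ is convex and lower semicontinuous, and $V_1$ is superlinear. Then $\mathcal N:=\mathcal L\cap(-\mathcal L)$ is a linear subspace of $\mathbb R^N$, and for every $(X,m)\in\mathcal C$ there exists $x\in\mathcal P\cap\mathcal N^\perp$ with $V_0(x)\le m$ and $X+V_1(x)\in\mathcal A$, where $\mathcal N^\perp$ is the orthogonal complement of $\mathcal N$ in $\operatorname{span}(\mathcal P)$.
   Context: Standing setup: Let $\mathcal{X}$ be a real topological vector space partially ordered by a convex cone $\mathcal{X}_+\subset\mathcal X$; write $X\ge Y$ iff $X-Y\in\mathcal X_+$. Fix $N\in\mathbb N$ and: a set $\mathcal P\subset\mathbb R^N$ with $0\in\mathcal P$; a function $V_0:\mathbb R^N\to\mathbb R$ with $V_0(0)=0$ and $V_0(x)\ge -V_0(-x)$ for all $x\in\mathbb R^N$; a map $V_1:\mathbb R^N\to\mathcal X$ with $V_1(0)=0$ and $V_1(x)\le -V_1(-x)$ for all $x\in\mathbb R^N$; a set $\mathcal A\subset\mathcal X$ with $0\in\mathcal A$ and $\mathcal A+\mathcal X_+\subset\mathcal A$. $V_1$ is superlinear if it is concave ($V_1(\lambda x+(1-\lambda)y)\ge\lambda V_1(x)+(1-\lambda)V_1(y)$, $\lambda\in[0,1]$) and positively homogeneous ($V_1(\lambda x)=\lambda V_1(x)$, $\lambda\ge0$). Asymptotic notions: for a nonempty set $C$ in a topological vector space, $C^\infty=\{X:\exists\text{ nets }(X_\alpha)\subset C,\ (\lambda_\alpha)\subset[0,\infty),\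 \lambda_\alpha\to0,\ \lambda_\alpha X_\alpha\to X\}$. For $f:\mathbb R^N\to\mathbb R$, its asymptotic function $f^\infty:\mathbb R^N\to[-\infty,\infty]$ is the function whose epigraph $\{(x,m)\in\mathbb R^N\times\mathbb R: f^\infty(x)\le m\}$ equals $(\operatorname{epi}f)^\infty$, where $\operatorname{epi}f=\{(x,m)\in\mathbb R^N\times\mathbb R: f(x)\le m\}$. $\mathcal L=\{x\in\mathcal P^\infty: V_0^\infty(x)\le0,\ V_1(x)\in\mathcal A^\infty\}$, and $\mathcal C=\{(X,m)\in\mathcal X\times\mathbb R:\exists x\in\mathcal P \text{ with } V_0(x)\le m,\ X+V_1(x)\in\mathcal A\}$. *)

From HB Require Import structures.
From mathcomp Require Import all_boot all_order all_algebra.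
From mathcomp Require Import all_classical all_reals all_analysis.
Set Implicit Arguments. Unset Strict Implicit. Unset Printing Implicit Defensive.
Import Order.TTheory GRing.Theory Num.Theory.
Local Open Scope classical_set_scope.
Local Open Scope ring_scope.

Import numFieldNormedType.Exports.

Section Defs.
Variable R : realType.

Definition directed_set (I : Type) (le : I -> I -> Prop) : Prop :=
  inhabited I /\ (forall i, le i i) /\
  (forall i j k, le i j -> le j k -> le i k) /\
  (forall i j, exists k, le i k /\ le j k).

Definition net_cvg (T : topologicalType) (I : Type) (le : I -> I -> Prop)
  (f : I -> T) (x : T) : Prop :=
  forall U, nbhs x U -> exists i0, forall i, le i0 i -> U (f i).

Definition asym_cone (E : topologicalLmodType R) (C : set E) : set E :=
  [set X | exists (I : Type) (le : I -> I -> Prop) (Xa : I -> E) (la : I -> R),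
     [/\ directed_set le, (forall i, C (Xa i)), (forall i, 0 <= la i),
         @net_cvg R^o _ le la 0 & @net_cvg E _ le (fun i => la i *: Xa i) X]].

Definition epi (N : nat) (f : 'rV[R]_N -> R) : set ('rV[R]_N * R^o)%type :=
  [set p | f p.1 <= p.2].

(* asymptotic function f^oo : R^N -> [-oo, +oo]: the function whose epigraph
   is (epi f)^oo, i.e. f^oo x = inf {m | (x, m) in (epi f)^oo} *)
Definition asym_fun (N : nat) (f : 'rV[R]_N -> R) (x : 'rV[R]_N) : \bar R :=
  ereal_inf [set (m%:E)%E | m in [set m : R | asym_cone (epi f) (x, m)]].

Definition convex_cone (E : lmodType R) (K : set E) : Prop :=
  K 0 /\ (forall x y, K x -> K y -> K (x + y)) /\
  (forall (l : R) x, 0 <= l -> K x -> K (l *: x)).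

Definition cle (E : lmodType R) (K : set E) (X Y : E) : Prop := K (Y - X).

Definition convex_set_ (E : lmodType R) (C : set E) : Prop :=
  forall x y (l : R), C x -> C y -> 0 <= l <= 1 -> C (l *: x + (1 - l) *: y).

Definition convex_fun_ (N : nat) (f : 'rV[R]_N -> R) : Prop :=
  forall x y (l : R), 0 <= l <= 1 ->
    f (l *: x + (1 - l) *: y) <= l * f x + (1 - l) * f y.

Definition lsc (N : nat) (f : 'rV[R]_N -> R) : Prop :=
  lower_semicontinuous (fun x : 'rV[R]_N => (f x)%:E).

Definition superlinear (E : lmodType R) (K : set E) (N : nat)
  (V : 'rV[R]_N -> E) : Prop :=
  (forall x y (l : R), 0 <= l <= 1 ->
     cle K (l *: V x + (1 - l) *: V y) (V (l *: x + (1 - l) *: y))) /\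
  (forall (l : R) x, 0 <= l -> V (l *: x) = l *: V x).

Definition is_subspace (N : nat) (S : set 'rV[R]_N) : Prop :=
  S 0 /\ forall (a : R) x y, S x -> S y -> S (a *: x + y).

Definition dotv (N : nat) (x y : 'rV[R]_N) : R := (x *m y^T) 0 0.

Definition span (N : nat) (S : set 'rV[R]_N) : set 'rV[R]_N :=
  [set y | exists (n : nat) (c : 'I_n -> R) (p : 'I_n -> 'rV[R]_N),
     (forall i, S (p i)) /\ y = \sum_(i < n) c i *: p i].

Definition orth_in_span (N : nat) (P M : set 'rV[R]_N) : set 'rV[R]_N :=
  [set y | span P y /\ forall z, M z -> dotv y z = 0].

Definition Lset (E : topologicalLmodType R) (N : nat) (P : set 'rV[R]_N)
  (V0 : 'rV[R]_N -> R) (V1 : 'rV[R]_N -> E) (A : set E) : set 'rV[R]_N :=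
  [set x | [/\ asym_cone P x, (asym_fun V0 x <= 0)%E & asym_cone A (V1 x)]].

Definition Nset (E : topologicalLmodType R) (N : nat) (P : set 'rV[R]_N)
  (V0 : 'rV[R]_N -> R) (V1 : 'rV[R]_N -> E) (A : set E) : set 'rV[R]_N :=
  Lset P V0 V1 A `&` [set x | Lset P V0 V1 A (- x)].

Definition Cset (E : topologicalLmodType R) (N : nat) (P : set 'rV[R]_N)
  (V0 : 'rV[R]_N -> R) (V1 : 'rV[R]_N -> E) (A : set E) : set (E * R)%type :=
  [set p | exists x, [/\ P x, V0 x <= p.2 & A (p.1 + V1 x)]].

End Defs.

(** The asymptotic cone of a nonempty closed convex set is a convex cone, and
  a superlinear [V1] is superadditive; hence [L] is a convex cone and its
  lineality space [N = L ∩ -L] is a linear subspace.  Closed convex sets are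
  stable under translation by their asymptotic directions, so moving a
  feasible point [x] along a direction of [L] keeps it feasible.  Subtracting
  from [x] its orthogonal projection onto [N] therefore yields a feasible point
  orthogonal to [N]; it lies in [P], hence in the span of [P]. *)

From Pilot Require Import Defs.
From HB Require Import structures.
From mathcomp Require Import all_boot all_order all_algebra.
From mathcomp Require Import all_classical all_reals all_analysis.
From mathcomp Require Import ring lra.
Import Order.TTheory GRing.Theory Num.Theory.
Import numFieldNormedType.Exports.
Local Open Scope classical_set_scope.
Local Open Scope ring_scope.

Section Subspace.
Context {R : realType} {n : nat} {S : set 'rV[R]_n}.

Lemma trmx_mulmx_self_eq0 p q (B : 'M[R]_(p, q)) : B^T *m B = 0 -> B = 0.
Proof.
move=> BTB0; apply/matrixP => i j; rewrite mxE.
have := congr1 (fun M : 'M[R]_q => M j j) BTB0; rewrite !mxE => sum0.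
have sq_ge0 k : true -> 0 <= B^T j k * B k j by rewrite mxE -expr2 sqr_ge0.
have := psumr_eq0P sq_ge0 sum0 (i := i) isT.
by rewrite mxE -expr2 => /eqP; rewrite sqrf_eq0 => /eqP.
Qed.

Lemma sub_span x : S x -> Defs.span S x.
Proof.
by move=> Sx; exists 1%N, (fun=> 1), (fun=> x); rewrite big_ord1 scale1r.
Qed.

Hypothesis subS : is_subspace S.

Lemma subspaceD x y : S x -> S y -> S (x + y).
Proof. by move=> Sx Sy; have := subS.2 1 x y Sx Sy; rewrite scale1r. Qed.

Lemma subspaceZ a x : S x -> S (a *: x).
Proof. by move=> Sx; have := subS.2 a x 0 Sx subS.1; rewrite addr0. Qed.

Lemma subspace_rowspace : exists M : 'M[R]_n, forall z, S z <-> (z <= M)%MS.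
Proof.
pose rowspace_in k (M : 'M[R]_(k, n)) := forall u : 'rV_k, S (u *m M).
suff [M [SM spanM]] :
    exists M : 'M[R]_n, rowspace_in _ M /\ forall z, S z -> (z <= M)%MS.
  by exists M => z; split=> [/spanM | /submxP[u ->]].
apply: contrapT => noM.
have rank_unbounded k : exists M : 'M[R]_n, rowspace_in _ M /\ (k <= \rank M)%N.
  elim: k => [|k [M [SM rkM]]].
    by exists 0; split=> // u; rewrite mulmx0; exact: subS.1.
  have [z Sz zM] : exists2 z, S z & ~~ (z <= M)%MS.
    apply: contrapT => allM; apply: noM; exists M; split=> // z Sz.
    by apply: contrapT => /negP zM; apply: allM; exists z.
  have SMz : rowspace_in _ (col_mx M z).
    move=> u; rewrite -[u]hsubmxK mul_row_col [rsubmx u]mx11_scalar.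
    by rewrite mul_scalar_mx; apply: subspaceD; [exact: SM | exact: subspaceZ].
  exists <<col_mx M z>>%MS; split.
    have /submxP[D ->] : (<<col_mx M z>> <= col_mx M z)%MS by rewrite genmxE.
    by move=> u; rewrite mulmxA.
  rewrite genmxE; apply: leq_ltn_trans rkM (rank_ltmx _).
  rewrite ltmxE -addsmxE addsmxSl /=; apply: contra zM.
  by move/(submx_trans _); apply; rewrite -addsmxE addsmxSr.
have [M [_ rkM]] := rank_unbounded n.+1.
by have := rank_leq_col M; rewrite leqNgt rkM.
Qed.

(* The normal equations [x M^T = u M M^T] are solvable because [M^T] and
   [M M^T] have the same range. *)
Lemma subspace_orth_proj x :
  exists2 y, S y & forall z, S z -> dotv (x - y) z = 0.
Proof.
have [M SM] := subspace_rowspace.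
have : (x *m M^T <= M *m M^T)%MS.
  rewrite submxE -mulmxA.
  suff -> : M^T *m cokermx (M *m M^T) = 0 by rewrite mulmx0.
  apply: trmx_mulmx_self_eq0.
  by rewrite trmx_mul trmxK -mulmxA (mulmxA M) mulmx_coker mulmx0.
case/submxP=> u xu; exists (u *m M); first by apply/SM; exact: submxMl.
move=> z /SM /submxP[w ->].
by rewrite /dotv trmx_mul mulmxA mulmxBl xu -mulmxA subrr mul0mx mxE.
Qed.

End Subspace.

Section Nets.
Context {R : realType}.

Definition net_filter {I : Type} (le : I -> I -> Prop) : set_system I :=
  [set U | exists i0, forall i, le i0 i -> U i].

Lemma net_filter_proper {I} {le : I -> I -> Prop} :
  directed_set le -> ProperFilter (net_filter le).
Proof.
move=> [[i0] [refl [trans dir]]]; constructor.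
- by move=> [j hj]; exact: (hj j (refl j)).
- constructor.
  + by exists i0.
  + move=> U V [a ha] [b hb]; have [k [ak bk]] := dir a b.
    by exists k => i ki; split; [apply: ha | apply: hb]; exact: trans ki.
  + by move=> U V UV [a ha]; exists a => i /ha; exact: UV.
Qed.

Lemma net_cvgE {T : topologicalType} {I} {le : I -> I -> Prop}
    {f : I -> T} {x} :
  net_cvg le f x <-> f @ net_filter le --> x.
Proof. by split=> cvgf U /cvgf. Qed.

Lemma cvg_net_cvg_nat {T : topologicalType} {f : nat -> T} {x} :
  f @ \oo --> x -> net_cvg leq f x.
Proof. by move=> cvgf U /cvgf[N _ hN]; exists N => i /hN. Qed.

Lemma tvs_cvgD {E : topologicalLmodType R} {T} {F : set_system T}
    (FF : Filter F) {f g : T -> E} {a b : E} :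
  f @ F --> a -> g @ F --> b -> (fun t => f t + g t) @ F --> a + b.
Proof. exact: (continuous2_cvg _ (@add_continuous E (a, b))). Qed.

Lemma tvs_cvgZ {E : topologicalLmodType R} {T} {F : set_system T}
    (FF : Filter F) {s : T -> R^o} {f : T -> E} {k : R^o} {a : E} :
  s @ F --> k -> f @ F --> a -> (fun t => s t *: f t) @ F --> k *: a.
Proof. exact: (continuous2_cvg _ (@scale_continuous R E (k, a))). Qed.

End Nets.

Section AsymptoticCone.
Context {R : realType} {E : topologicalLmodType R} {C : set E}.

Lemma asym_cone0 {c} : C c -> asym_cone C 0.
Proof.
move=> Cc; exists unit, (fun _ _ => True), (fun=> c), (fun=> 0 : R); split=> //.
- by move=> U /nbhs_singleton U0; exists tt.
- by move=> U /nbhs_singleton U0; exists tt => i _; rewrite scale0r.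
Qed.

Lemma asym_coneZ {a d} : 0 <= a -> asym_cone C d -> asym_cone C (a *: d).
Proof.
move=> a0 [I [le [X [la [dir CX la0 /net_cvgE cvgla /net_cvgE cvgX]]]]].
have FF : Filter (net_filter le) by have := net_filter_proper dir; case.
exists I, le, X, (fun i => a * la i); split=> //.
- by move=> i; rewrite mulr_ge0.
- apply/net_cvgE.
  by have := tvs_cvgZ FF (cvg_cst (a : R^o)) cvgla; rewrite scaler0; apply.
- apply/net_cvgE; under eq_fun do rewrite -scalerA.
  by have := tvs_cvgZ FF (cvg_cst (a : R^o)) cvgX; apply.
Qed.

Lemma asym_cone_ray c d :
  (forall t : R, 0 <= t -> C (c + t *: d)) -> asym_cone C d.
Proof.
move=> rayC; pose la k : R := k.+1%:R^-1.
exists nat, leq, (fun k => c + k%:R *: d), la; split.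
- split; first by constructor; exact: 0%N.
  split; first exact: leqnn.
  split; first by move=> i j k; exact: leq_trans.
  by move=> i j; exists (maxn i j); rewrite leq_maxl leq_maxr.
- by move=> k; apply: rayC; exact: ler0n.
- by move=> k; rewrite invr_ge0 ler0n.
- exact/cvg_net_cvg_nat/cvg_harmonic.
- apply: cvg_net_cvg_nat.
  have FF : Filter (\oo : set_system nat) := eventually_filter.
  have cvg1la : (fun k => 1 - la k : R^o) @ \oo --> (1 - 0 : R^o).
    by apply: cvgB; [exact: cvg_cst | exact: cvg_harmonic].
  have := tvs_cvgD FF (tvs_cvgZ FF (@cvg_harmonic R) (cvg_cst c))
                      (tvs_cvgZ FF cvg1la (cvg_cst d)).
  rewrite scale0r add0r subr0 scale1r.
  suff -> : (fun k => la k *: (c + k%:R *: d))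
          = (fun k => harmonic k *: c + (1 - la k) *: d) by apply.
  apply: funext => k; rewrite scalerDr scalerA; congr (_ + _ *: d).
  by rewrite /la -natr1; field; rewrite natr1 pnatr_eq0.
Qed.

Hypotheses (convexC : convex_set_ C) (closedC : closed C).

(* Recession property: [(1 - la) c + la X] lies in [C] and tends to [c + d]. *)
Lemma closed_convex_add_asym {c d} : C c -> asym_cone C d -> C (c + d).
Proof.
move=> Cc [I [le [X [la [dir CX la0 /net_cvgE cvgla /net_cvgE cvgX]]]]].
have PF := net_filter_proper dir.
have FF : Filter (net_filter le) by case: PF.
have cvg1la : (fun i => 1 - la i : R^o) @ net_filter le --> (1 - 0 : R^o).
  by apply: cvgB; [exact: cvg_cst | exact: cvgla].
have cvg_comb := tvs_cvgD FF (tvs_cvgZ FF cvg1la (cvg_cst c)) cvgX.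
rewrite subr0 scale1r in cvg_comb.
apply: (@closed_cvg _ _ _ PF _ C closedC _ _ (cvg_comb FF)).
apply: filterS (@cvgr_lt R I _ FF la 0 cvgla 1 ltr01) => i /= lai1.
by rewrite addrC; apply: convexC => //; rewrite la0 ltW.
Qed.

Lemma asym_coneD {c x y} :
  C c -> asym_cone C x -> asym_cone C y -> asym_cone C (x + y).
Proof.
move=> Cc Cx Cy; apply: (@asym_cone_ray c) => t t0.
rewrite scalerDr addrA.
apply: closed_convex_add_asym; last exact: asym_coneZ.
by apply: closed_convex_add_asym => //; exact: asym_coneZ.
Qed.

Lemma asym_cone_upward {K : set E} {c a k} :
  convex_cone K -> (forall b l, C b -> K l -> C (b + l)) ->
  C c -> asym_cone C a -> K k -> asym_cone C (a + k).
Proof.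
move=> [_ [_ KZ]] CK Cc Ca Kk; apply: (@asym_cone_ray c) => t t0.
rewrite scalerDr addrA; apply: CK; last exact: KZ.
by apply: closed_convex_add_asym => //; exact: asym_coneZ.
Qed.

End AsymptoticCone.

Section AsymptoticFunction.
Context {R : realType} {N : nat} {f : 'rV[R]_N -> R}.

Lemma epi_convex : convex_fun_ f -> convex_set_ (epi f).
Proof.
move=> cvxf [x m] [y m'] l /= fxm fym /andP[l0 l1]; rewrite /epi /=.
apply: le_trans (cvxf x y l _) _; first by rewrite l0 l1.
by apply: lerD; apply: ler_wpM2l => //; rewrite subr_ge0.
Qed.

Lemma epi_closed : lsc f -> closed (epi f).
Proof.
move=> lscf; rewrite -[epi f]setCK; apply: open_closedC.
rewrite openE => -[x m] /= /negP; rewrite -ltNge /= => mfx.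
pose a := (m + f x) / 2.
have [V Vx fV] := lscf x a (ltac:(rewrite lte_fin /a; lra)).
exists (V, [set r | r < a]) => /=.
  by split=> //; apply: lt_nbhsl; rewrite /a; lra.
move=> [y r] /= [Vy ra]; rewrite /epi /= => fyr.
by have := fV y Vy; rewrite lte_fin; lra.
Qed.

Lemma asym_fun_le0P {x} : (asym_fun f x <= 0)%E <->
  forall e : R, 0 < e -> exists2 m, m <= e & asym_cone (epi f) (x, m).
Proof.
split=> [fx0 e e0 | small].
  have : (asym_fun f x < e%:E)%E by apply: le_lt_trans fx0 _; rewrite lte_fin.
  by case/ereal_inf_lt => _ [m epim <-]; rewrite lte_fin => /ltW; exists m.
apply/lee_addgt0Pr => e e0; rewrite add0e.
have [m me epim] := small e e0.
by apply: ge_ereal_inf; exists m%:E; [exists m | rewrite lee_fin].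
Qed.

Lemma asym_fun_le0_addr x {d} : convex_fun_ f -> lsc f ->
  (asym_fun f d <= 0)%E -> f (x + d) <= f x.
Proof.
move=> cvxf lscf /asym_fun_le0P fd0; apply/ler_addgt0Pr => e e0.
have [m me epim] := fd0 e e0.
have : epi f ((x, f x) + (d, m)).
  by apply: (closed_convex_add_asym (epi_convex cvxf) (epi_closed lscf)) epim;
    rewrite /epi /=.
by rewrite /epi /= => /le_trans; apply; rewrite lerD2l.
Qed.

End AsymptoticFunction.

Lemma superlinear_superadditive {R : realType} {E : lmodType R} {K : set E}
    {N} {V : 'rV[R]_N -> E} :
  convex_cone K -> superlinear K V -> forall x y, cle K (V x + V y) (V (x + y)).
Proof.
move=> [_ [_ KZ]] [concV homV] x y.
have half_ge0 : (0 : R) <= 2^-1 by rewrite invr_ge0 ler0n.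
have := concV x y 2^-1; rewrite half_ge0 invf_le1 ?ler1n ?ltr0n // => /(_ isT).
have -> : 1 - 2^-1 = 2^-1 :> R by field.
rewrite /cle -!scalerDr homV // -scalerBr => /(KZ 2 _ (ler0n _ 2)).
by rewrite scalerA mulfV ?pnatr_eq0 // scale1r.
Qed.

Lemma upward_cle {R : realType} {E : lmodType R} {K C : set E} {a b} :
  (forall c k, C c -> K k -> C (c + k)) -> C a -> cle K a b -> C b.
Proof. by move=> CK Ca Kab; rewrite -(subrK a b) addrC; exact: CK. Qed.

Section RecessionCone.
Context {R : realType} {E : topologicalLmodType R} {K : set E} {N : nat}.
Context {P : set 'rV[R]_N} {V0 : 'rV[R]_N -> R} {V1 : 'rV[R]_N -> E}.
Context {A : set E}.
Hypotheses (coneK : convex_cone K) (P0 : P 0).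
Hypotheses (A0 : A 0) (AK : forall a k, A a -> K k -> A (a + k)).
Hypotheses (convexA : convex_set_ A) (closedA : closed A).
Hypotheses (convexP : convex_set_ P) (closedP : closed P).
Hypotheses (convexV0 : convex_fun_ V0) (lscV0 : lsc V0).
Hypothesis superV1 : superlinear K V1.

Local Notation L := (Lset P V0 V1 A).

Let epiV0_convex := epi_convex convexV0.
Let epiV0_closed := epi_closed lscV0.
Let epiV0 : epi V0 (0, V0 0) := lexx _.

Lemma Lset0 : L 0.
Proof.
split; first exact: asym_cone0 P0.
- apply/asym_fun_le0P => e e0; exists 0; first exact: ltW.
  exact: asym_cone0 epiV0.
- have := superV1.2 0 0 (lexx _); rewrite !scale0r => ->.
  exact: asym_cone0 A0.
Qed.

Lemma LsetZ a x : 0 <= a -> L x -> L (a *: x).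
Proof.
move=> a0 [Px V0x V1x]; split; first exact: asym_coneZ.
- have [->|a_neq0] := eqVneq a 0; first by rewrite scale0r; case: Lset0.
  have a_gt0 : 0 < a by rewrite lt0r a_neq0.
  apply/asym_fun_le0P => e e0.
  have [m me epim] := asym_fun_le0P.1 V0x (e / a) (divr_gt0 e0 a_gt0).
  exists (a * m).
    by rewrite -(divfK (lt0r_neq0 a_gt0) e) [a * m]mulrC ler_pM2r.
  exact: asym_coneZ a0 epim.
- by rewrite superV1.2 //; exact: asym_coneZ.
Qed.

Lemma LsetD x y : L x -> L y -> L (x + y).
Proof.
move=> [Px V0x V1x] [Py V0y V1y]; split; first exact: asym_coneD P0 Px Py.
- apply/asym_fun_le0P => e e0; have e2 : 0 < e / 2 by rewrite divr_gt0.
  have [m1 m1e epim1] := asym_fun_le0P.1 V0x _ e2.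
  have [m2 m2e epim2] := asym_fun_le0P.1 V0y _ e2.
  exists (m1 + m2); first lra.
  exact: (asym_coneD (C := epi V0) epiV0_convex epiV0_closed epiV0 epim1 epim2).
- apply: upward_cle (superlinear_superadditive coneK superV1 x y).
    by move=> b k; exact: asym_cone_upward A0.
  exact: asym_coneD A0 V1x V1y.
Qed.

Lemma Nset_subspace : is_subspace (Nset P V0 V1 A).
Proof.
split; first by split=> /=; rewrite ?oppr0; exact: Lset0.
have NZ a z : L z -> L (- z) -> L (a *: z).
  move=> Lz Lnz; have [a0|a_lt0] := leP 0 a; first exact: LsetZ.
  by rewrite -[a]opprK scaleNr -scalerN; apply: LsetZ; rewrite // oppr_ge0 ltW.
move=> a x y [Lx Lnx] [Ly Lny]; split; first by apply: LsetD => //; exact: NZ.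
by rewrite /= opprD -scalerN; apply: LsetD => //; apply: NZ; rewrite ?opprK.
Qed.

Lemma feasibleD_Lset {X m x d} :
  [/\ P x, V0 x <= m & A (X + V1 x)] -> L d ->
  [/\ P (x + d), V0 (x + d) <= m & A (X + V1 (x + d))].
Proof.
move=> [Px V0x AX] [Pd V0d V1d]; split.
- exact: closed_convex_add_asym Px Pd.
- exact: le_trans (asym_fun_le0_addr x convexV0 lscV0 V0d) V0x.
- apply: upward_cle AK (closed_convex_add_asym convexA closedA AX V1d) _.
  rewrite /cle -[X + V1 x + V1 d]addrA [X + V1 _]addrC addrKA.
  exact: superlinear_superadditive coneK superV1 x d.
Qed.

End RecessionCone.

Theorem mainTheorem13 (R : realType) (E : topologicalLmodType R)
  (Xplus : set E) (N : nat) (P : set 'rV[R]_N)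
  (V0 : 'rV[R]_N -> R) (V1 : 'rV[R]_N -> E) (A : set E) :
  (* standing setup *)
  convex_cone Xplus ->
  P 0 ->
  V0 0 = 0 -> (forall x, - V0 (- x) <= V0 x) ->
  V1 0 = 0 -> (forall x, cle Xplus (V1 x) (- V1 (- x))) ->
  A 0 -> (forall a k, A a -> Xplus k -> A (a + k)) ->
  (* hypotheses of the theorem *)
  convex_set_ A -> closed A ->
  convex_set_ P -> closed P ->
  convex_fun_ V0 -> lsc V0 ->
  superlinear Xplus V1 ->
  is_subspace (Nset P V0 V1 A) /\
  (forall (X : E) (m : R), Cset P V0 V1 A (X, m) ->
     exists x, [/\ P x, orth_in_span P (Nset P V0 V1 A) x,
                   V0 x <= m & A (X + V1 x)]).
Proof.
move=> coneK P0 _ _ _ _ A0 AK cvxA clA cvxP clP cvxV0 lscV0 superV1.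
have subN := Nset_subspace coneK P0 A0 AK cvxA clA cvxP clP cvxV0 lscV0 superV1.
split=> // X m [x feas_x].
have [n0 [_ Lnn0] orth_n0] := subspace_orth_proj subN x.
have [Px' V0x' Ax'] :=
  feasibleD_Lset coneK AK cvxA clA cvxP clP cvxV0 lscV0 superV1 feas_x Lnn0.
by exists (x - n0); split=> //; split; [exact: sub_span | exact: orth_n0].
Qed.
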